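(* Let $p_1,\dots,p_{n}$ be the $p$-values of the tested nodes at a given level $l$ of a rooted tree, and fix a node $j$. Let $T_1,\dots,T_t$ be the subtrees rooted at the ancestors of node $j$ (each containing node $j$), let $p^{(-j)}_{T_s}$ be the set of $p$-values of the tested level-$l$ nodes in $T_s$ other than $j$, and define $$\omega_j=1+\sum_{s=1}^t\mathbb{I}\big(p_j>p^{(-j)}_{T_s}\big),$$ where $p_j>p^{(-j)}_{T_s}$ means that $p_j$ exceeds every element of $p^{(-j)}_{T_s}$. Assume $p_j$ is uniformly distributed on $[0,1]$ and independent of all other $p$-values $(p_i)_{i\ne j}$ at level $l$. Let $\mathcal B^{(-j)}$ denote the event that the vector of all other $p$-values $(p_i)_{i\neq j}$ belongs to a given Borel set. Then for every $\alpha\in(0,1)$, $$\mathbb{E}\big[\omega_j\,\mathbb{I}(\mathcal B^{(-j)},\,p_j\le\alpha)\big]\le\frac{\alpha}{1-\alpha}\,\mathbb{E}\big[\omega_j\,\mathbb{I}(\mathcal B^{(-j)},\,p_j>\alpha)\big].$$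
   Context: A subtree rooted at a node consists of that node and all its descendants. The quantity $\omega_j$ counts node $j$ together with each ancestor of $j$ that would be detected if node $j$ were rejected along with all tested level-$l$ nodes with smaller $p$-values. *)

From HB Require Import structures.
From mathcomp Require Import all_boot all_order all_algebra.
From mathcomp Require Import all_classical all_reals all_analysis.
Set Implicit Arguments. Unset Strict Implicit. Unset Printing Implicit Defensive.
Import Order.TTheory GRing.Theory Num.Theory.
Local Open Scope classical_set_scope.
Local Open Scope ring_scope.

Section Tree.
Variable V : finType.
(* A rooted tree on the finite node set V is given by a parent map:
   [parent v = None] iff v is the root. *)
Variable parent : V -> option V.

Definition up (k : nat) (v : V) : option V := iter k (obind parent) (Some v).

Definition is_rooted_tree (r : V) : Prop :=
  parent r = None /\ forall v, exists k, up k v = Some r.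

Definition ancestor (a v : V) : Prop := exists k, (0 < k)%N /\ up k v = Some a.

Definition in_subtree (a v : V) : Prop := v = a \/ ancestor a v.

Definition tested_level_nodes (r : V) (tested : {set V}) (l : nat) : {set V} :=
  [set v in tested | up l v == Some r].

Definition omega {Omega : Type} {R : realType} (L : {set V})
    (pv : V -> Omega -> R) (j : V) (w : Omega) : R :=
  1 + \sum_(a : V | `[< ancestor a j >])
        (if `[< forall i, i \in L :\ j -> in_subtree a i -> pv i w < pv j w >]
         then 1 else 0).

Definition others_vec {Omega : Type} {R : realType} (L : {set V})
    (pv : V -> Omega -> R) (j : V) (w : Omega) : (#|L :\ j|).-tuple R :=
  [tuple pv (@enum_val V (mem (L :\ j)) i) w | i < #|L :\ j|].
End Tree.

From HB Require Import structures.
From mathcomp Require Import all_boot all_order all_algebra.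
From mathcomp Require Import all_classical all_reals all_analysis.
From mathcomp Require Import measurable_realfun.
Import Order.TTheory GRing.Theory Num.Theory.
Local Open Scope classical_set_scope.
Local Open Scope ring_scope.

(* Write omega_j = 1 + sum_a 1{E_a}, where a ranges over the ancestors of j and
   E_a is the event that p_j exceeds the other tested level-l p-values in the
   subtree of a; then E[omega_j 1_S] = P(S) + sum_a P(E_a /\ S), and the terms
   are compared one at a time.  On {p_j <= alpha}, E_a forces those other
   p-values below alpha, while on {p_j > alpha} that condition implies E_a.
   As p_j is uniform and independent of the others,
   P(p_j <= alpha, others in C) = alpha/(1-alpha) P(p_j > alpha, others in C)
   for every Borel C, which sandwiches each term. *)

Section uniform01.
Context {R : realType}.

Lemma measurable_set_le (a : R) : measurable [set x | x <= a].
Proof.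
rewrite (_ : [set x | x <= a] = `]-oo, a]%classic); first exact: measurable_itv.
by apply/seteqP; split => x /=; rewrite in_itv.
Qed.

Lemma measurable_set_gt (a : R) : measurable [set x | a < x].
Proof.
rewrite (_ : [set x | a < x] = `]a, +oo[%classic); first exact: measurable_itv.
by apply/seteqP; split => x /=; rewrite in_itv /= andbT.
Qed.

Lemma uniform_prob01E (A : set R) : measurable A ->
  uniform_prob (@ltr01 R) A = lebesgue_measure (A `&` `[0, 1]%classic).
Proof.
move=> mA; rewrite /uniform_prob integral_uniform_pdf.
rewrite (eq_integral (cst 1%:E)) ?integral_cst ?mul1e//; first exact: measurableI.
move=> x; rewrite inE => -[_]; rewrite /= in_itv /= => x01.
by rewrite /uniform_pdf x01 subr0 invr1.
Qed.

Lemma uniform_prob01_le (a : R) : 0 <= a <= 1 ->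
  uniform_prob (@ltr01 R) [set x | x <= a] = a%:E.
Proof.
case/andP=> a0 a1.
have -> : [set x | x <= a] = `]-oo, a]%classic by apply/seteqP; split => x /=; rewrite in_itv.
rewrite uniform_prob01E //.
have -> : `]-oo, a]%classic `&` `[0, 1] = `[0, a]%classic.
  apply/seteqP; split => x /=; rewrite !in_itv /=; first by case=> xa /andP[->].
  by case/andP=> x0 xa; rewrite xa x0 (le_trans xa a1).
by rewrite lebesgue_measure_itv /= lte_fin; case: ltgtP a0 => // [_ _|<- _]; rewrite ?sube0 // subrr.
Qed.

Lemma uniform_prob01_gt (a : R) : 0 <= a <= 1 ->
  uniform_prob (@ltr01 R) [set x | a < x] = (1 - a)%:E.
Proof.
move=> a01; have -> : [set x | a < x] = ~` [set x | x <= a].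
  by apply/seteqP; split => x /=; rewrite ltNge => /negP.
rewrite probability_setC; last exact: measurable_set_le.
by rewrite EFinB; congr (1 - _)%E; exact: uniform_prob01_le.
Qed.

End uniform01.

Lemma integral_sum_indic d (T : measurableType d) (R : realType)
    (mu : {measure set T -> \bar R}) (I : Type) (s : seq I) (E : I -> set T) :
  (forall i, measurable (E i)) ->
  (\int[mu]_x (\sum_(i <- s) (\1_(E i) x)%:E) = \sum_(i <- s) mu (E i))%E.
Proof.
move=> mE; rewrite ge0_integral_sum //.
- by apply: eq_bigr => i _; rewrite integral_indic // setIT.
- by move=> i; apply/measurable_EFinP/measurable_indic.
Qed.

Section omega_decomposition.
Variables (R : realType) (d : measure_display) (Omega : measurableType d).
Variables (V : finType) (parent : V -> option V) (L : {set V}).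
Variables (pv : V -> Omega -> R) (j : V).
Hypothesis mpv : forall i, measurable_fun setT (pv i).

Definition exceeds_subtree (a : V) : set Omega :=
  [set w | forall i, i \in L :\ j -> in_subtree parent a i -> pv i w < pv j w].

Definition others_below (a : V) (alpha : R) : set (#|L :\ j|.-tuple R) :=
  [set t | forall k, in_subtree parent a (@enum_val V (mem (L :\ j)) k) ->
                     tnth t k < alpha].

Lemma omegaE w : omega parent L pv j w =
  1 + \sum_(a | `[< ancestor parent a j >]) \1_(exceeds_subtree a) w.
Proof.
congr (1 + _); apply: eq_bigr => a _; rewrite indicE.
by case: asboolP => h; [rewrite mem_set | rewrite memNset].
Qed.

Lemma measurable_exceeds_subtree a : measurable (exceeds_subtree a).
Proof.
have -> : exceeds_subtree a =
    \bigcap_(i in [set i | i \in L :\ j /\ in_subtree parent a i])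
      ((fun w => pv i w < pv j w) @^-1` [set true]).
  by apply/seteqP; split => w /= h i; [case; apply: h | move=> ? ?; apply: h].
apply: fin_bigcap_measurable; first exact: finite_finset.
by move=> i _; rewrite -[_ @^-1` _]setTI; apply: measurable_fun_ltr.
Qed.

Lemma measurable_others_below a alpha : measurable (others_below a alpha).
Proof.
have -> : others_below a alpha =
    \bigcap_(k in [set k | in_subtree parent a (@enum_val V (mem (L :\ j)) k)])
      ((fun t => tnth t k) @^-1` `]-oo, alpha[%classic).
  by apply/seteqP; split => t /= h k hk; rewrite ?in_itv /=; move: (h k hk); rewrite ?in_itv.
apply: fin_bigcap_measurable; first exact: finite_finset.
by move=> k _; rewrite -[_ @^-1` _]setTI; exact: measurable_tnth.
Qed.

Lemma measurable_others_vec : measurable_fun setT (others_vec L pv j).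
Proof.
apply/measurable_fun_tnthP => k.
by rewrite (_ : _ \o _ = pv (enum_val k)) //; apply/funext => w /=; rewrite tnth_mktuple.
Qed.

Lemma exceeds_subtree_le a alpha :
  exceeds_subtree a `&` [set w | pv j w <= alpha] `<=`
  others_vec L pv j @^-1` others_below a alpha.
Proof.
move=> w [Ew Xw] k /= ak; rewrite tnth_mktuple.
by apply: lt_le_trans Xw; apply: Ew => //; exact: enum_valP.
Qed.

Lemma others_below_gt a alpha :
  others_vec L pv j @^-1` others_below a alpha `&` [set w | alpha < pv j w] `<=`
  exceeds_subtree a.
Proof.
move=> w [/= Yw Xw] i iL ai; apply: lt_trans Xw.
by have := Yw (enum_rank_in iL i); rewrite tnth_mktuple enum_rankK_in //; apply.
Qed.

Lemma integral_omega_indic (mu : {measure set Omega -> \bar R}) (S : set Omega) :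
  measurable S ->
  (\int[mu]_w ((omega parent L pv j w)%:E * (\1_S w)%:E) =
   mu S + \sum_(a | `[< ancestor parent a j >]) mu (exceeds_subtree a `&` S))%E.
Proof.
move=> mS.
transitivity (\int[mu]_w ((\1_S w)%:E +
    \sum_(a | `[< ancestor parent a j >]) (\1_(exceeds_subtree a `&` S) w)%:E))%E.
  apply: eq_integral => w _; rewrite omegaE sumEFin -EFinD -EFinM mulrDl mul1r.
  by rewrite mulr_suml; congr (_ + _)%:E; apply: eq_bigr => a _; rewrite indicI.
under eq_integral do rewrite -big_filter.
rewrite ge0_integralD //=.
- rewrite integral_indic // setIT integral_sum_indic ?big_filter // => a.
  exact/measurableI/mS/measurable_exceeds_subtree.
- exact/measurable_EFinP/measurable_indic.
- by move=> w _; apply: sume_ge0 => a _; rewrite lee_fin indicE ler0n.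
- apply: emeasurable_sum => a; apply/measurable_EFinP/measurable_indic.
  exact/measurableI/mS/measurable_exceeds_subtree.
Qed.

End omega_decomposition.

Section uniform_independent_threshold.
Context {R : realType} {d : measure_display} {Omega : measurableType d}.
Context {P : probability Omega R} {X : {RV P >-> R}}.
Context {d' : measure_display} {T : measurableType d'} {Y : Omega -> T}.
Context {alpha : R}.
Hypothesis mY : measurable_fun setT Y.
Hypothesis X_uniform :
  forall A, measurable A -> P (X @^-1` A) = uniform_prob (@ltr01 R) A.
Hypothesis XY_indep : forall A C, measurable A -> measurable C ->
  P (X @^-1` A `&` Y @^-1` C) = (P (X @^-1` A) * P (Y @^-1` C))%E.
Hypothesis alpha01 : 0 < alpha < 1.

Lemma measurable_preimage_Y C : measurable C -> measurable (Y @^-1` C).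
Proof. by move=> mC; rewrite -[_ @^-1` _]setTI; exact: mY. Qed.

Lemma uniform_indep_tail_ratio C : measurable C ->
  P (X @^-1` [set x | x <= alpha] `&` Y @^-1` C) =
  ((alpha / (1 - alpha))%:E * P (X @^-1` [set x | (alpha < x)%R] `&` Y @^-1` C))%E.
Proof.
case/andP: alpha01 => a0 a1 mC.
have mle := measurable_set_le alpha; have mgt := measurable_set_gt alpha.
rewrite !XY_indep // !X_uniform // uniform_prob01_le ?uniform_prob01_gt ?ltW //.
by rewrite muleA -EFinM divfK // subr_eq0 gt_eqF.
Qed.

Lemma uniform_indep_tail_le (E : set Omega) (D B : set T) :
  measurable E -> measurable D -> measurable B ->
  E `&` [set w | X w <= alpha] `<=` Y @^-1` D ->
  Y @^-1` D `&` [set w | alpha < X w] `<=` E ->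
  (P (E `&` (Y @^-1` B `&` [set w | (X w <= alpha)%R])) <=
   (alpha / (1 - alpha))%:E * P (E `&` (Y @^-1` B `&` [set w | (alpha < X w)%R])))%E.
Proof.
move=> mE mD mB ED DE.
have mYB : measurable (Y @^-1` B) by apply: measurable_preimage_Y.
have mYDB : measurable (Y @^-1` (D `&` B)) by apply/measurable_preimage_Y/measurableI.
have mXle := measurable_funPTI X (measurable_set_le alpha).
have mXgt := measurable_funPTI X (measurable_set_gt alpha).
apply: (@le_trans _ _ (P (X @^-1` [set x | x <= alpha] `&` Y @^-1` (D `&` B)))).
  apply: le_measure; rewrite ?inE.
  - by apply: measurableI mE (measurableI _ _ mYB mXle).
  - exact: measurableI.
  by move=> w [Ew [Bw Xw]]; split => //; split => //; apply: ED.
rewrite uniform_indep_tail_ratio; last exact: measurableI.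
apply: lee_wpmul2l.
  by case/andP: alpha01 => a0 a1; rewrite lee_fin divr_ge0 ?subr_ge0 ?ltW.
apply: le_measure; rewrite ?inE.
- exact: measurableI.
- by apply: measurableI mE (measurableI _ _ mYB mXgt).
by move=> w [Xw [Dw Bw]]; split; [apply: DE | split].
Qed.

End uniform_independent_threshold.

Theorem lemma2 (R : realType) (d : measure_display) (Omega : measurableType d)
  (P : probability Omega R)
  (V : finType) (parent : V -> option V) (r : V) (tested : {set V}) (l : nat)
  (pv : V -> {RV P >-> R}) (j : V) (B : set ((#|tested_level_nodes parent r tested l :\ j|).-tuple R))
  (alpha : R) :
  is_rooted_tree parent r ->
  j \in tested_level_nodes parent r tested l ->
  (* p_j ~ Uniform[0,1] *)
  (forall A : set R, measurable A -> P (pv j @^-1` A) = uniform_prob (@ltr01 R) A) ->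
  (* p_j independent of the vector of all other p-values at level l *)
  (forall (A : set R) (C : set ((#|tested_level_nodes parent r tested l :\ j|).-tuple R)),
     measurable A -> measurable C ->
     P (pv j @^-1` A `&` others_vec (tested_level_nodes parent r tested l) (fun i => pv i) j @^-1` C)
     = (P (pv j @^-1` A) * P (others_vec (tested_level_nodes parent r tested l) (fun i => pv i) j @^-1` C))%E) ->
  measurable B ->
  0 < alpha < 1 ->
  let L := tested_level_nodes parent r tested l in
  let om := omega parent L (fun i => pv i) j in
  let Bev := others_vec L (fun i => pv i) j @^-1` B in
  (\int[P]_w ((om w)%:E * (\1_(Bev `&` [set w | pv j w <= alpha]) w)%:E)
   <= (alpha / (1 - alpha))%:E *
      \int[P]_w ((om w)%:E * (\1_(Bev `&` [set w | pv j w > alpha]) w)%:E))%E.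
Proof.
move=> _ _ pj_uniform pj_indep mB alpha01; cbv zeta.
set L := tested_level_nodes parent r tested l.
have mpv i : measurable_fun setT (pv i) := measurable_funPT (pv i).
have mY : measurable_fun setT (others_vec L (fun i => pv i) j).
  exact: measurable_others_vec.
have tail_le := uniform_indep_tail_le mY pj_uniform pj_indep alpha01.
have mBev := measurable_preimage_Y mY _ mB.
have mle := measurable_funPTI (pv j) (measurable_set_le alpha).
have mgt := measurable_funPTI (pv j) (measurable_set_gt alpha).
rewrite !integral_omega_indic //; try exact: measurableI.
rewrite ge0_muleDr ?sume_ge0 // ge0_sume_distrr //; apply: leeD.
  have := tail_le setT setT B measurableT measurableT mB.
  by rewrite preimage_setT !setTI; apply.
apply: lee_sum => a _; apply: tail_le.
- exact: measurable_exceeds_subtree.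
- exact: measurable_others_below.
- exact: mB.
- exact: exceeds_subtree_le.
- exact: others_below_gt.
Qed.
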